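(* Consider an instance with $n$ agents, $m$ items and binary additive valuations (notation as in the context). For every stable fractional allocation $x$ (items divisible) with profile $(h_1,\dots,h_n)$: (1) $h_i=d$ for each integer $d\ge0$ and each $i\in\mathsf{layer}_d$; (2) $h_i\in[d-1,d]$ for each integer $d\ge1$ and each $i\in\mathsf{layer}^-_d$.
   Context: Agents $[n]$, items $[m]$; each agent $i$ has a set $L_i\subseteq[m]$ of liked items. Indivisible setting: an allocation $\chi=(\chi_1,\dots,\chi_n)$ is a tuple of pairwise disjoint subsets of $[m]$, clean if $\chi_i\subseteq L_i$, max-USW if it maximizes $\sum_i|\chi_i\cap L_i|$; allocations are clean and max-USW. Arc $(i,i')$, $i\ne i'$, if some $o\in\chi_i$ lies in $L_{i'}$; a transfer $u\to v$ is a simple directed path from $u$ to $v$ with at least one arc; narrowing if $|\chi_u|\ge|\chi_v|+2$; stable if no narrowing transfer. For integer $d\ge0$, $\mathsf{layer}_d$ is the set of agents $i$ with $|\chi_i|=d$ in every stable indivisible allocation $\chi$; for integer $d\ge1$, $\mathsf{layer}^-_d$ is the set of agents $i$ with $\{|\chi_i|:\chi\text{ stable indivisible}\}=\{d-1,d\}$. Divisible setting: a fractional allocation is $x=(x_{o,i})$ with $x_{o,i}\ge0$, $\sum_i x_{o,i}\le1$; clean if $x_{o,i}=0$ for $o\notin L_i$; max-USW if it maximizes $\sum_i\sum_{o\in L_i}x_{o,i}$; allocations are clean and max-USW; profile $h_i=\sum_o x_{o,i}$. A transfer $u\to v$: distinct agents $u=i_1,\dots,i_k=v$ ($k\ge2$),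 items $o_l$ with $x_{o_l,i_l}>0$, $o_l\in L_{i_{l+1}}$, amount $0<\Delta\le\min_l x_{o_l,i_l}$, moving $\Delta$ of $o_l$ from $i_l$ to $i_{l+1}$; narrowing if $h_u-\Delta\ge h_v+\Delta$; stable if no narrowing transfer. *)

(* Agents are 'I_n, items are 'I_m, L i = liked items of agent i. *)
From HB Require Import structures.
From mathcomp Require Import all_boot all_order all_algebra.
Set Implicit Arguments. Unset Strict Implicit. Unset Printing Implicit Defensive.
Import Order.TTheory GRing.Theory Num.Theory.

Section Indivisible.
Variables (n m : nat) (L : 'I_n -> {set 'I_m}).

Definition indiv_alloc (chi : 'I_n -> {set 'I_m}) : Prop :=
  forall i j : 'I_n, i != j -> [disjoint chi i & chi j].

Definition indiv_clean (chi : 'I_n -> {set 'I_m}) : Prop :=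
  forall i, chi i \subset L i.

Definition indiv_usw (chi : 'I_n -> {set 'I_m}) : nat :=
  \sum_(i < n) #|chi i :&: L i|.

Definition indiv_maxusw (chi : 'I_n -> {set 'I_m}) : Prop :=
  indiv_alloc chi /\
  forall chi' : 'I_n -> {set 'I_m}, indiv_alloc chi' -> indiv_usw chi' <= indiv_usw chi.

Definition arc (chi : 'I_n -> {set 'I_m}) (i i' : 'I_n) : bool :=
  (i != i') && [exists o, (o \in chi i) && (o \in L i')].

Definition indiv_transfer (chi : 'I_n -> {set 'I_m}) (u v : 'I_n) : Prop :=
  exists s : seq 'I_n,
    [/\ s != [::], path (arc chi) u s, uniq (u :: s) & last u s = v].

Definition indiv_stable (chi : 'I_n -> {set 'I_m}) : Prop :=
  forall u v : 'I_n, indiv_transfer chi u v -> ~ (#|chi v| + 2 <= #|chi u|).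

Definition stable_indiv (chi : 'I_n -> {set 'I_m}) : Prop :=
  [/\ indiv_clean chi, indiv_maxusw chi & indiv_stable chi].

Definition in_layer (d : nat) (i : 'I_n) : Prop :=
  forall chi, stable_indiv chi -> #|chi i| = d.

Definition in_layer_minus (d : nat) (i : 'I_n) : Prop :=
  [/\ forall chi, stable_indiv chi -> #|chi i| = d.-1 \/ #|chi i| = d,
      exists2 chi, stable_indiv chi & #|chi i| = d.-1
    & exists2 chi, stable_indiv chi & #|chi i| = d].

End Indivisible.

Local Open Scope ring_scope.

Section Divisible.
Variables (R : realFieldType) (n m : nat) (L : 'I_n -> {set 'I_m}).

(* x o i = fraction of item o given to agent i *)
Definition frac_alloc (x : 'I_m -> 'I_n -> R) : Prop :=
  (forall o i, 0 <= x o i) /\ (forall o, \sum_(i < n) x o i <= 1).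

Definition frac_clean (x : 'I_m -> 'I_n -> R) : Prop :=
  forall o i, o \notin L i -> x o i = 0.

Definition frac_usw (x : 'I_m -> 'I_n -> R) : R :=
  \sum_(i < n) \sum_(o in L i) x o i.

Definition frac_maxusw (x : 'I_m -> 'I_n -> R) : Prop :=
  frac_alloc x /\
  forall x' : 'I_m -> 'I_n -> R, frac_alloc x' -> frac_usw x' <= frac_usw x.

Definition profile (x : 'I_m -> 'I_n -> R) (i : 'I_n) : R :=
  \sum_(o < m) x o i.

(* transfer u -> v: agents u = i_1, ..., i_k = v distinct (k >= 2), written
   as u :: s; items os = o_1, ..., o_{k-1}; step l moves delta of o_l from
   i_l to i_{l+1}. *)
Definition frac_steps (u : 'I_n) (s : seq 'I_n) (os : seq 'I_m) :=
  zip (zip (u :: s) s) os.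

Definition frac_transfer (x : 'I_m -> 'I_n -> R) (u v : 'I_n)
    (s : seq 'I_n) (os : seq 'I_m) (delta : R) : Prop :=
  [/\ s != [::], uniq (u :: s), last u s = v & size os = size s] /\
  [/\ (forall t, t \in frac_steps u s os ->
          0 < x t.2 t.1.1 /\ t.2 \in L t.1.2),
      0 < delta
    & forall t, t \in frac_steps u s os -> delta <= x t.2 t.1.1].

Definition frac_narrowing (x : 'I_m -> 'I_n -> R) (u v : 'I_n) (delta : R) : Prop :=
  profile x u - delta >= profile x v + delta.

Definition frac_stable (x : 'I_m -> 'I_n -> R) : Prop :=
  forall u v s os delta, frac_transfer x u v s os delta ->
    ~ frac_narrowing x u v delta.

Definition stable_frac (x : 'I_m -> 'I_n -> R) : Prop :=
  [/\ frac_clean x, frac_maxusw x & frac_stable x].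

End Divisible.

From Pilot Require Import Defs.
From HB Require Import structures.
From mathcomp Require Import all_boot all_order all_algebra.
From mathcomp Require Import ring lra.
Set Implicit Arguments. Unset Strict Implicit. Unset Printing Implicit Defensive.
Import Order.TTheory GRing.Theory Num.Theory.
Local Open Scope ring_scope.

(* Stability forces every positive share x o i onto an agent of minimal profile h among
   those who like o, and max-USW forces every liked item to be fully allocated.  Consider
   integral assignments of the liked items to such minimal likers, with an arc y -> y'
   whenever an item given to y could equally go to y'.  A set of agents closed under arcs
   gets at most its profile mass integrally, and a set closed under reverse arcs at least
   it; so a surplus agent (load > h) reaches a deficit agent, and moving one item along each
   arc of a simple path shifts one unit of load between them.  Minimising the sum of
   (load - h)^2 gives a rounding with |load - h| < 1 everywhere, which is a stable
   indivisible allocation because profiles increase along arcs.  Pushing load into, resp.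
   out of, a fixed agent i among roundings yields stable allocations chi with
   |chi i| >= h i, resp. |chi i| <= h i, and the layer conditions then pin down h i. *)

Lemma sum_le_exists_lt (R : realDomainType) (I : finType) (P : pred I)
    (F G : I -> R) j :
  \sum_(i | P i) F i <= \sum_(i | P i) G i -> P j -> G j < F j ->
  exists2 k, P k & F k < G k.
Proof.
move=> le_FG Pj lt_GFj.
case: (boolP [exists k, P k && (F k < G k)]) => [/existsP[k /andP[]]|]; first by exists k.
move=> /existsPn ge_FG; suff : \sum_(i | P i) G i < \sum_(i | P i) F i by rewrite ltNge le_FG.
rewrite (bigD1 j) // [ltRHS](bigD1 j) //= ltr_leD // ler_sum // => i /andP[Pi _].
by have := ge_FG i; rewrite Pi /= -leNgt.
Qed.

Lemma sum_card_disjoint (I T : finType) (A : I -> {set T}) (B : {set T}) :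
  (forall i j, i != j -> [disjoint A i & A j]) -> (forall i, A i \subset B) ->
  (\sum_i #|A i| <= #|B|)%N.
Proof.
move=> disjA subAB.
have cardE (C : {set T}) : #|C| = (\sum_t (t \in C))%N.
  by rewrite -sum1_card big_mkcond /=; apply: eq_bigr => t _; case: (t \in C).
under eq_bigr do rewrite cardE.
rewrite cardE exchange_big /=; apply: leq_sum => t _.
case: (pickP (fun i => t \in A i)) => [i tAi|tA]; last by rewrite big1 // => i _; rewrite tA.
rewrite (bigD1 i) //= big1 => [|j ji]; last by rewrite (disjointFl (disjA j i ji)).
by rewrite tAi (subsetP (subAB i)).
Qed.

Section LikedItems.
Variables (n m : nat) (L : 'I_n -> {set 'I_m}).

Definition liked : {set 'I_m} := [set o | [exists i, o \in L i]].

Lemma indiv_usw_le_liked chi : indiv_alloc chi -> (indiv_usw L chi <= #|liked|)%N.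
Proof.
move=> disj_chi; apply: sum_card_disjoint => [i j ij|i].
  by rewrite (disjointWl (subsetIl _ _)) // (disjointWr (subsetIl _ _)) ?disj_chi.
by apply/subsetP => o /setIP[_ oLi]; rewrite inE; apply/existsP; exists i.
Qed.

End LikedItems.

Section StableFractional.
Variables (R : realFieldType) (n m : nat) (L : 'I_n -> {set 'I_m}).
Variable x : 'I_m -> 'I_n -> R.
Hypothesis stable_x : stable_frac L x.

Local Notation h := (profile x).
Implicit Types (f : {ffun 'I_m -> 'I_n}) (o : 'I_m).

Lemma share_ge0 o i : 0 <= x o i.
Proof. by case: stable_x => _ [[x_ge0 _] _] _. Qed.

Lemma share_sum_le1 o : \sum_i x o i <= 1.
Proof. by case: stable_x => _ [[_ x_le1] _] _. Qed.

Lemma liked_share_sum o : o \in liked L -> \sum_i x o i = 1.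
Proof.
rewrite inE => /existsP[v oLv].
case: stable_x => _ [[x_ge0 x_le1] x_max] _.
have := x_le1 o; rewrite le_eqVlt => /orP[/eqP //|lt1]; exfalso.
pose c := 1 - \sum_i x o i.
have c_gt0 : 0 < c by rewrite subr_gt0.
pose x' o' i' := x o' i' + (if (o' == o) && (i' == v) then c else 0).
have alloc_x' : frac_alloc x'.
  split=> [o' i'|o']; first by rewrite addr_ge0 //; case: ifP => // _; exact: ltW.
  rewrite /x' big_split /=; have [->|o'o] := eqVneq o' o.
    by rewrite -big_mkcond big_pred1_eq /c; lra.
  by rewrite big1_eq addr0 x_le1.
have : frac_usw L x' = frac_usw L x + c.
  rewrite /frac_usw /x'; under eq_bigr do rewrite big_split /=.
  rewrite big_split /=; congr (_ + _).
  rewrite (bigD1 v) //= addrC big1 ?add0r => [|i iv]; last first.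
    by apply: big1 => o' _; rewrite (negbTE iv) andbF.
  by rewrite (bigD1 o) //= !eqxx addrC big1 ?add0r // => o' /andP[_ /negbTE->].
by move=> usw_x'; have := x_max _ alloc_x'; rewrite usw_x' gerDl leNgt c_gt0.
Qed.

Definition min_liker (o : 'I_m) (y : 'I_n) : bool :=
  (o \in L y) && [forall v, (o \in L v) ==> (h y <= h v)].

Lemma pos_share_min_liker o u : 0 < x o u -> min_liker o u.
Proof.
case: stable_x => clean_x _ stable => xou_gt0.
have oLu : o \in L u by apply: contraLR xou_gt0 => /clean_x ->; rewrite ltxx.
rewrite /min_liker oLu; apply/forallP => v; apply/implyP => oLv.
rewrite leNgt; apply/negP => lt_vu.
have vu : v != u by apply: contraTneq lt_vu => ->; rewrite ltxx.
pose delta := Order.min (x o u) ((h u - h v) / 2).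
have delta_le : delta <= (h u - h v) / 2 by rewrite ge_min lexx orbT.
apply: (stable u v [:: v] [:: o] delta); last by rewrite /frac_narrowing; lra.
split; first by split; rewrite //= inE eq_sym vu.
split=> [t||t]; rewrite /frac_steps /= ?inE.
- by move=> /eqP->.
- by rewrite lt_min xou_gt0 divr_gt0 // subr_gt0.
- by move=> /eqP->; rewrite ge_min lexx.
Qed.

Lemma min_liker_liked o y : min_liker o y -> o \in liked L.
Proof. by case/andP => oLy _; rewrite inE; apply/existsP; exists y. Qed.

Lemma exists_min_liker o : o \in liked L -> exists v, min_liker o v.
Proof.
rewrite inE => /existsP[v0 oLv0].
case: (@arg_minP _ _ _ v0 (fun v => o \in L v) h oLv0) => v oLv v_min; exists v.
by rewrite /min_liker oLv; apply/forallP => w; apply/implyP; apply: v_min.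
Qed.

Definition min_assignment (f : {ffun 'I_m -> 'I_n}) : bool :=
  [forall o in liked L, min_liker o (f o)].

Lemma min_assignmentP f o : min_assignment f -> o \in liked L -> min_liker o (f o).
Proof. by move=> /forall_inP; apply. Qed.

Lemma exists_min_assignment (i0 : 'I_n) : exists f, min_assignment f.
Proof.
exists [ffun o => odflt i0 [pick v | min_liker o v]].
apply/forall_inP => o /exists_min_liker[v ov]; rewrite ffunE.
by case: pickP => [//|/(_ v)]; rewrite ov.
Qed.

Definition bundle (f : {ffun 'I_m -> 'I_n}) (y : 'I_n) : {set 'I_m} :=
  [set o | (f o == y) && (o \in L y)].

Definition load (f : {ffun 'I_m -> 'I_n}) (y : 'I_n) : R := #|bundle f y|%:R.

Lemma loadE f y : load f y = \sum_o ((f o == y) && (o \in L y))%:R.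
Proof.
rewrite /load /bundle -sum1dep_card natr_sum big_mkcond.
by apply: eq_bigr => o _; case: ifP.
Qed.

Definition move_arc (f : {ffun 'I_m -> 'I_n}) : rel 'I_n :=
  fun y y' => (y != y') && [exists o, (f o == y) && min_liker o y'].

Lemma pos_share_move_arc f o y : 0 < x o y -> f o != y -> move_arc f (f o) y.
Proof.
move=> /pos_share_min_liker oy foy; rewrite /move_arc foy.
by apply/existsP; exists o; rewrite eqxx.
Qed.

Lemma sum_card_bundle f (P : pred 'I_n) :
  (\sum_(y | P y) #|bundle f y|)%N = #|[set o | P (f o) & o \in L (f o)]|.
Proof.
rewrite -sum1dep_card (partition_big f P) => [|o /andP[] //].
apply: eq_bigr => y Py; rewrite -sum1dep_card; apply: eq_bigl => o.
by case: eqVneq => [->|]; rewrite ?Py ?andbT ?andbF.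
Qed.

Lemma sum_load f (P : pred 'I_n) :
  \sum_(y | P y) load f y = \sum_(o | P (f o) && (o \in L (f o))) 1.
Proof. by rewrite -natr_sum sum_card_bundle -sum1dep_card natr_sum. Qed.

Lemma load_le_profile_out_closed f (P : pred 'I_n) :
  (forall y y', move_arc f y y' -> P y -> P y') ->
  \sum_(y | P y) load f y <= \sum_(y | P y) h y.
Proof.
move=> closedP; rewrite sum_load /profile exchange_big /=.
rewrite [leRHS](bigID (fun o => P (f o) && (o \in L (f o)))) /=.
apply: ler_wpDr; first by do 2!apply: sumr_ge0 => ? _; apply: share_ge0.
apply: ler_sum => o /andP[Pfo oLfo].
have o_liked : o \in liked L by rewrite inE; apply/existsP; exists (f o).
rewrite -(liked_share_sum o_liked) [leLHS](bigID P) /= [X in _ + X]big1 ?addr0 // => y.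
apply: contraNeq => xoy_neq0; have xoy_gt0 : 0 < x o y by rewrite lt_def xoy_neq0 share_ge0.
have [<- //|foy] := eqVneq (f o) y.
exact: closedP (pos_share_move_arc xoy_gt0 foy) Pfo.
Qed.

Lemma profile_le_load_in_closed f (P : pred 'I_n) : min_assignment f ->
  (forall y y', move_arc f y y' -> P y' -> P y) ->
  \sum_(y | P y) h y <= \sum_(y | P y) load f y.
Proof.
move=> min_f closedP; rewrite sum_load /profile exchange_big /=.
rewrite (bigID (fun o => P (f o) && (o \in L (f o)))) /= [X in _ + X]big1 ?addr0 => [|o].
  apply: ler_sum => o _; apply: le_trans (share_sum_le1 o).
  by rewrite [leRHS](bigID P) /= lerDl sumr_ge0 // => y _; apply: share_ge0.
apply: contraNeq => /eqP /psumr_neq0P[y _|y /andP[Py xoy_gt0]]; first exact: share_ge0.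
have o_min := min_assignmentP min_f (min_liker_liked (pos_share_min_liker xoy_gt0)).
rewrite (andP o_min).1 andbT; have [-> //|foy] := eqVneq (f o) y.
exact: closedP (pos_share_move_arc xoy_gt0 foy) Py.
Qed.

Lemma reachable_deficit f j : h j < load f j ->
  exists2 k, connect (move_arc f) j k & load f k < h k.
Proof.
move=> surplus_j; apply: sum_le_exists_lt (connect0 _ j) surplus_j.
apply: load_le_profile_out_closed => y y' arc_yy' jy.
exact: connect_trans jy (connect1 arc_yy').
Qed.

Lemma coreachable_surplus f j : min_assignment f -> load f j < h j ->
  exists2 k, connect (move_arc f) k j & h k < load f k.
Proof.
move=> min_f deficit_j.
apply: (sum_le_exists_lt (P := connect (move_arc f) ^~ j)) (connect0 _ j) deficit_j.
apply: profile_le_load_in_closed => // y y' arc_yy' y'j.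
exact: connect_trans (connect1 arc_yy') y'j.
Qed.

(* Stated additively so that it holds trivially for j = k and composes along paths. *)
Definition unit_moved f f' j k : Prop :=
  forall y, load f' y + (y == j)%:R = load f y + (y == k)%:R.

Lemma unit_moved_trans f1 f2 f3 j k l :
  unit_moved f1 f2 j k -> unit_moved f2 f3 k l -> unit_moved f1 f3 j l.
Proof. by move=> move12 move23 y; have := move12 y; have := move23 y; lra. Qed.

Lemma unit_movedE f f' j k : j != k -> unit_moved f f' j k ->
  [/\ load f' j = load f j - 1, load f' k = load f k + 1
    & forall y, y != j -> y != k -> load f' y = load f y].
Proof.
move=> jk moved; have kj : k != j by rewrite eq_sym.
split=> [||y yj yk].
- by have := moved j; rewrite eqxx (negbTE jk) /=; lra.
- by have := moved k; rewrite eqxx (negbTE kj) /=; lra.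
- by have := moved y; rewrite (negbTE yj) (negbTE yk) /=; lra.
Qed.

Lemma move_arc_unit_moved f j k : min_assignment f -> move_arc f j k ->
  exists2 f', min_assignment f' & unit_moved f f' j k /\
    forall y y', y != j -> move_arc f y y' -> move_arc f' y y'.
Proof.
move=> min_f /andP[jk /existsP[o /andP[/eqP foj ok]]].
pose f' := [ffun o' => if o' == o then k else f o'].
have f'E o' : f' o' = if o' == o then k else f o' by rewrite ffunE.
exists f'.
  by apply/forall_inP => o' /(min_assignmentP min_f); rewrite f'E; case: eqP => [->|].
split=> [y|y y' yj /andP[yy' /existsP[o' /andP[/eqP fo'y o'y']]]].
  have oLj : o \in L j by rewrite -foj; case/andP: (min_assignmentP min_f (min_liker_liked ok)).
  rewrite !loadE (bigD1 o) // [in RHS](bigD1 o) //= f'E eqxx foj.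
  rewrite (eq_bigr (fun o' => ((f o' == y) && (o' \in L y))%:R)) => [|o' o'o]; last first.
    by rewrite f'E (negbTE o'o).
  rewrite ![y == _]eq_sym.
  case: (eqVneq k y) => [<-|_]; first by rewrite (andP ok).1 (negbTE jk) /=; lra.
  by case: (eqVneq j y) => [<-|_]; rewrite ?oLj /=; lra.
rewrite /move_arc yy'; apply/existsP; exists o'; rewrite f'E o'y' andbT.
by case: (eqVneq o' o) => [o'o|_]; [move: yj; rewrite -fo'y o'o foj eqxx | rewrite fo'y].
Qed.

Lemma path_unit_moved f j s : min_assignment f -> path (move_arc f) j s -> uniq (j :: s) ->
  exists2 f', min_assignment f' & unit_moved f f' j (last j s).
Proof.
elim: s f j => [|w s IHs] f j min_f /=; first by exists f.
move=> /andP[arc_jw path_ws] /andP[j_notin uniq_ws].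
have [f1 min_f1 [moved1 arcs1]] := move_arc_unit_moved min_f arc_jw.
have path1 : path (move_arc f1) w s.
  apply: (@sub_in_path _ (predC1 j)) path_ws => [y y' /= yj _|]; first exact: arcs1.
  by apply/allP => y ys /=; apply: contraNneq j_notin => <-.
have [f' min_f' moved'] := IHs f1 w min_f1 path1 uniq_ws.
by exists f' => //; apply: unit_moved_trans moved1 moved'.
Qed.

Lemma connect_unit_moved f j k : min_assignment f -> connect (move_arc f) j k ->
  exists2 f', min_assignment f' & unit_moved f f' j k.
Proof.
move=> min_f /connectP[s /shortenP[s' path_s' uniq_s' _] ->].
exact: path_unit_moved.
Qed.

Lemma move_out_of_surplus f j : min_assignment f -> h j < load f j ->
  exists k f', [/\ min_assignment f', load f k < h k & unit_moved f f' j k].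
Proof.
move=> min_f /reachable_deficit[k jk deficit_k].
have [f' min_f' moved] := connect_unit_moved min_f jk.
by exists k, f'.
Qed.

Lemma move_into_deficit f j : min_assignment f -> load f j < h j ->
  exists k f', [/\ min_assignment f', h k < load f k & unit_moved f f' k j].
Proof.
move=> min_f /(coreachable_surplus min_f)[k kj surplus_k].
have [f' min_f' moved] := connect_unit_moved min_f kj.
by exists k, f'.
Qed.

Lemma surplus_neq_deficit f j k : h j < load f j -> load f k < h k -> j != k.
Proof. by move=> surplus_j; apply: contraTneq => <-; rewrite -leNgt ltW. Qed.

Definition imbalance f : R := \sum_y (load f y - h y) ^+ 2.

Lemma imbalance_unit_moved f f' j k : j != k -> unit_moved f f' j k ->
  imbalance f' = imbalance f + 2 - 2 * (load f j - h j) + 2 * (load f k - h k).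
Proof.
move=> jk /(unit_movedE jk)[load_j load_k load_y]; have kj : k != j by rewrite eq_sym.
rewrite /imbalance (bigD1 j) // (bigD1 k) // [in RHS](bigD1 j) // [in RHS](bigD1 k) //=.
rewrite (eq_bigr (fun y => (load f y - h y) ^+ 2)) => [|y /andP[yj yk]]; last by rewrite load_y.
rewrite load_j load_k; ring.
Qed.

Definition rounding f : bool := min_assignment f && [forall y, h y - 1 < load f y < h y + 1].

Lemma roundingP f y : rounding f -> h y - 1 < load f y < h y + 1.
Proof. by case/andP => _ /forallP. Qed.

Lemma rounding_unit_moved f f' j k : rounding f -> min_assignment f' -> unit_moved f f' j k ->
  h j < load f j -> load f k < h k -> rounding f'.
Proof.
move=> round_f min_f' moved surplus_j deficit_k; rewrite /rounding min_f'.
apply/forallP => y; have /andP[lo hi] := roundingP y round_f; have := moved y.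
have [yj|yj] := eqVneq y j.
  subst y; rewrite (negbTE (surplus_neq_deficit surplus_j deficit_k)) /= => moved_j.
  by apply/andP; split; lra.
by have [yk|yk] := eqVneq y k; [subst y|]; move=> /= moved_y; apply/andP; split; lra.
Qed.

Lemma exists_rounding (i0 : 'I_n) : exists f, rounding f.
Proof.
have [f0 min_f0] := exists_min_assignment i0.
case: (@arg_minP _ _ _ f0 min_assignment imbalance min_f0) => f min_f f_opt.
exists f; rewrite /rounding min_f; apply/forallP => j.
apply/andP; split; rewrite ltNge; apply/negP => unbalanced_j.
- have deficit_j : load f j < h j by lra.
  have [k [f' [min_f' surplus_k moved]]] := move_into_deficit min_f deficit_j.
  have := imbalance_unit_moved (surplus_neq_deficit surplus_k deficit_j) moved.
  by have := f_opt f' min_f'; lra.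
- have surplus_j : h j < load f j by lra.
  have [k [f' [min_f' deficit_k moved]]] := move_out_of_surplus min_f surplus_j.
  have := imbalance_unit_moved (surplus_neq_deficit surplus_j deficit_k) moved.
  by have := f_opt f' min_f'; lra.
Qed.

Lemma exists_rounding_load_ge i : exists2 f, rounding f & h i <= load f i.
Proof.
have [f0 round_f0] := exists_rounding i.
case: (@arg_maxnP _ f0 rounding (fun f => #|bundle f i|) round_f0) => f round_f f_opt.
exists f => //; rewrite leNgt; apply/negP => deficit_i.
have [k [f' [min_f' surplus_k moved]]] := move_into_deficit (andP round_f).1 deficit_i.
have round_f' := rounding_unit_moved round_f min_f' moved surplus_k deficit_i.
have [_ load_i _] := unit_movedE (surplus_neq_deficit surplus_k deficit_i) moved.
have : load f' i <= load f i by rewrite /load ler_nat; apply: f_opt.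
lra.
Qed.

Lemma exists_rounding_load_le i : exists2 f, rounding f & load f i <= h i.
Proof.
have [f0 round_f0] := exists_rounding i.
case: (@arg_minnP _ f0 rounding (fun f => #|bundle f i|) round_f0) => f round_f f_opt.
exists f => //; rewrite leNgt; apply/negP => surplus_i.
have [k [f' [min_f' deficit_k moved]]] := move_out_of_surplus (andP round_f).1 surplus_i.
have round_f' := rounding_unit_moved round_f min_f' moved surplus_i deficit_k.
have [load_i _ _] := unit_movedE (surplus_neq_deficit surplus_i deficit_k) moved.
have : load f i <= load f' i by rewrite /load ler_nat; apply: f_opt.
lra.
Qed.

Lemma bundle_clean f : indiv_clean L (bundle f).
Proof. by move=> y; apply/subsetP => o; rewrite inE => /andP[]. Qed.

Lemma bundle_alloc f : indiv_alloc (bundle f).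
Proof.
move=> y y' yy'; rewrite -setI_eq0; apply/eqP/setP => o; rewrite !inE.
by case: (eqVneq (f o) y) => [foy|] //=; rewrite foy (negbTE yy') andbF.
Qed.

Lemma bundle_max_usw f : min_assignment f -> indiv_maxusw L (bundle f).
Proof.
move=> min_f; split=> [|chi alloc_chi]; first exact: bundle_alloc.
apply: leq_trans (indiv_usw_le_liked L alloc_chi) _.
rewrite /indiv_usw (eq_bigr (fun y => #|bundle f y|)) => [|y _]; last first.
  by rewrite (setIidPl (bundle_clean f y)).
rewrite (sum_card_bundle f predT); apply/subset_leq_card/subsetP => o o_liked.
by rewrite inE (andP (min_assignmentP min_f o_liked)).1.
Qed.

Lemma path_bundle_profile f u s : min_assignment f ->
  path (Defs.arc L (bundle f)) u s -> h u <= h (last u s).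
Proof.
move=> min_f; elim: s u => [|w s IHs] u /=; first by [].
move=> /andP[/andP[_ /existsP[o /andP[o_u oLw]]] /IHs]; apply: le_trans.
move: o_u; rewrite inE => /andP[/eqP fo oLu].
have o_liked : o \in liked L by rewrite inE; apply/existsP; exists u.
by have /andP[_ /forallP/(_ w)] := min_assignmentP min_f o_liked; rewrite fo oLw.
Qed.

Lemma rounding_stable f : rounding f -> stable_indiv L (bundle f).
Proof.
move=> round_f; have min_f := (andP round_f).1.
split; [exact: bundle_clean | exact: bundle_max_usw |].
move=> u v [s [_ path_s _ <-]] narrowing.
have := path_bundle_profile min_f path_s.
have /andP[_ hi_u] := roundingP u round_f; have /andP[lo_v _] := roundingP (last u s) round_f.
have : load f (last u s) + 2 <= load f u by rewrite /load -natrD ler_nat.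
lra.
Qed.

Lemma profile_between_stable_sizes i :
  exists2 chi1, stable_indiv L chi1 &
  exists2 chi2, stable_indiv L chi2 & #|chi1 i|%:R <= h i <= #|chi2 i|%:R.
Proof.
have [f1 round_f1 le1] := exists_rounding_load_le i.
have [f2 round_f2 le2] := exists_rounding_load_ge i.
exists (bundle f1); first exact: rounding_stable.
by exists (bundle f2); [exact: rounding_stable | rewrite le1 le2].
Qed.

End StableFractional.

Theorem lemma7 (R : realFieldType) (n m : nat) (L : 'I_n -> {set 'I_m})
    (x : 'I_m -> 'I_n -> R) :
  stable_frac L x ->
  (forall (d : nat) (i : 'I_n), in_layer L d i -> profile x i = d%:R) /\
  (forall (d : nat) (i : 'I_n), (1 <= d)%N -> in_layer_minus L d i ->
     (d.-1)%:R <= profile x i <= d%:R).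
Proof.
move=> stable_x; split=> [d i layer_i | d i _ [sizes _ _]];
  have [chi1 stable1 [chi2 stable2 /andP[le1 le2]]] := profile_between_stable_sizes stable_x i.
  by apply/eqP; rewrite eq_le -{1}(layer_i _ stable2) -(layer_i _ stable1) le2 le1.
have size_le c : c = d.-1 \/ c = d -> (d.-1 <= c <= d)%N by case=> ->; rewrite leq_pred ?leqnn.
have /andP[lo1 _] := size_le _ (sizes _ stable1); have /andP[_ hi2] := size_le _ (sizes _ stable2).
by rewrite (le_trans _ le1) ?ler_nat // (le_trans le2) ?ler_nat.
Qed.
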